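(* Let $\mathcal{B}=(v_1,\dots,v_N)$ with $v_1,\dots,v_N$ independent and uniform in $\mathbb{F}_2^n$. For $k\in\{1,\dots,n\}$ let $C^k\in\mathbb{F}_2^N$ be the $k$-th column, $C^k_j=(v_j)_k$, and define the equivalence relation $k\sim_{\mathcal B}j$ iff $C^k=C^j$ or $C^k=1-C^j$ (componentwise complement). Let $|I|$ be the number of equivalence classes of $\sim_{\mathcal B}$ on $\{1,\dots,n\}$. Then for $i=1,\dots,n$, $$\mathbb{P}(|I|=i)=\frac{1}{2^{(N-1)(n-i)}}\sum_{(n_1,\dots,n_i)\in S^i_{n-i}}\ \prod_{j=1}^i j^{n_j}\left(1-\frac{j-1}{2^{N-1}}\right),$$ where $S^i_m=\{(n_1,\dots,n_i)\in\mathbb{Z}^i: n_k\ge0,\ \sum_{j=1}^i n_j=m\}$. *)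

From mathcomp Require Import all_boot all_order all_algebra.
Set Implicit Arguments. Unset Strict Implicit. Unset Printing Implicit Defensive.
Import GRing.Theory Num.Theory.
Local Open Scope ring_scope.

(* A family B = (v_1,...,v_N) of vectors of F_2^n is the N x n matrix whose
   j-th row is v_j; its k-th column is C^k, with C^k_j = (v_j)_k. *)

Definition col_equiv (N n : nat) (B : 'M['F_2]_(N, n)) : rel 'I_n :=
  fun k j => (col k B == col j B) || (col k B == const_mx 1 - col j B).

Definition num_classes (N n : nat) (B : 'M['F_2]_(N, n)) : nat :=
  #|equivalence_partition (col_equiv B) [set: 'I_n]|.

(* P(|I| = i) when v_1,...,v_N are independent uniform in F_2^n, i.e. B is
   uniform on 'M['F_2]_(N, n). *)
Definition prob_num_classes (N n i : nat) : rat :=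
  (#|[set B : 'M['F_2]_(N, n) | num_classes B == i]|)%:R
  / (#|{: 'M['F_2]_(N, n)}|)%:R.

(* S^i_m = {(n_1,...,n_i) in Z^i : n_k >= 0, sum n_j = m}, represented by
   functions 'I_i -> 'I_(m+1) (each n_k <= m automatically). *)
Definition S_set (i m : nat) : {set {ffun 'I_i -> 'I_m.+1}} :=
  [set f : {ffun 'I_i -> 'I_m.+1} | (\sum_(k < i) (f k : nat))%N == m].

From mathcomp Require Import all_boot all_order all_algebra.
From mathcomp Require Import ring.
Set Implicit Arguments. Unset Strict Implicit. Unset Printing Implicit Defensive.
Import GRing.Theory Num.Theory.

(* Subtract the first entry of a column from its other entries: this gives a
   vector of F_2^(N-1), and two columns are equivalent iff these normalized
   columns coincide, since the only constants of F_2 are 0 and 1 and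
   1 - C = C + 1. The normalized columns and the first row determine B, so |I|
   is the number of values of a uniformly random function {1..n} -> F_2^(N-1).
   The functions with exactly i values number S(n,i) (2^(N-1))^_i by the
   recursion of the Stirling numbers of the second kind, and
   S(n,i) = h_(n-i)(1,...,i) is the sum over S^i_(n-i) in the statement: it is
   the coefficient of X^(n-i) in prod_(k<i) sum_(j<=n-i) ((k+1)X)^j. *)

Fixpoint stirling2 (n k : nat) : nat :=
  match n, k with
  | 0, 0 => 1
  | 0, _.+1 | _.+1, 0 => 0
  | n.+1, k.+1 => k.+1 * stirling2 n k.+1 + stirling2 n k
  end.

Lemma stirling2SS n k :
  stirling2 n.+1 k.+1 = k.+1 * stirling2 n k.+1 + stirling2 n k.
Proof. by []. Qed.

Lemma stirling2_small n k : n < k -> stirling2 n k = 0.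
Proof.
elim: n k => [|n IHn] [|k] //= ltnk.
by rewrite !IHn ?muln0 // ltnW.
Qed.

Lemma stirling2nn n : stirling2 n n = 1.
Proof. by elim: n => //= n ->; rewrite stirling2_small ?muln0. Qed.

Lemma card_set_sum (T : finType) (P : pred T) :
  #|[set x | P x]| = \sum_x (P x : nat).
Proof. by rewrite -sum1dep_card big_mkcond. Qed.

Section FfunCons.

Variables (T : finType) (n : nat).

Definition ffun_cons (x : T) (t : {ffun 'I_n -> T}) : {ffun 'I_n.+1 -> T} :=
  [ffun k => if unlift ord0 k is Some k' then t k' else x].

Definition ffun_uncons (g : {ffun 'I_n.+1 -> T}) : T * {ffun 'I_n -> T} :=
  (g ord0, [ffun k => g (lift ord0 k)]).

Lemma ffun_consK : cancel (fun p => ffun_cons p.1 p.2) ffun_uncons.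
Proof.
case=> x t; rewrite /ffun_uncons ffunE unlift_none; congr pair.
by apply/ffunP => k; rewrite !ffunE liftK.
Qed.

Lemma ffun_unconsK : cancel ffun_uncons (fun p => ffun_cons p.1 p.2).
Proof.
move=> g; apply/ffunP => k; rewrite ffunE.
by case: unliftP => [j|] ->; rewrite ?ffunE.
Qed.

Lemma imset_ffun_cons x t :
  [set ffun_cons x t k | k in 'I_n.+1] = x |: [set t k | k in 'I_n].
Proof.
apply/setP => y; rewrite !inE; apply/imsetP/predU1P => [[k _ ->]|].
  rewrite ffunE; case: unliftP => [j|] _; [right; exact: imset_f | by left].
case=> [->|/imsetP[j _ ->]]; first by exists ord0; rewrite ?ffunE ?unlift_none.
by exists (lift ord0 j); rewrite ?ffunE ?liftK.
Qed.

Lemma big_ffunS (R : Type) (idx : R) (op : Monoid.com_law idx)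
    (F : {ffun 'I_n.+1 -> T} -> R) :
  \big[op/idx]_g F g = \big[op/idx]_x \big[op/idx]_t F (ffun_cons x t).
Proof.
rewrite (pair_bigA _ (fun x t => F (ffun_cons x t))).
by rewrite (reindex (fun p => ffun_cons p.1 p.2)) //; exists ffun_uncons => ? _;
  rewrite (ffun_consK, ffun_unconsK).
Qed.

End FfunCons.

Lemma card_setU1_eqS (T : finType) (A : {set T}) k :
  #|[set x | #|x |: A| == k.+1]| =
  (#|A| == k.+1) * k.+1 + (#|A| == k) * (#|T| - k).
Proof.
rewrite -sum1dep_card big_mkcond (bigID [in A]) /=.
under eq_bigr => x xA do rewrite cardsU1 xA.
under [X in _ + X]eq_bigr => x xA do rewrite cardsU1 xA add1n eqSS.
rewrite !sum_nat_const /= add0n.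
have -> : #|(fun x : T => x \notin A)| = #|T| - #|A|.
  by rewrite -(cardC A) addKn.
by case: eqVneq => [->|_]; case: eqVneq => [->|_];
  rewrite ?muln0 ?muln1 ?mul1n ?mul0n ?addn0.
Qed.

Lemma card_ffuns_image (T : finType) n k :
  #|[set g : {ffun 'I_n -> T} | #|[set g j | j in 'I_n]| == k]| =
  stirling2 n k * #|T| ^_ k.
Proof.
elim: n k => [|n IHn] k.
  have im0 (g : {ffun 'I_0 -> T}) : [set g j | j in 'I_0] = set0.
    by apply/setP => y; rewrite inE; apply/imsetP => -[[]].
  under eq_finset => g do rewrite im0 cards0.
  by case: k => [|k]; rewrite ?cards0 // cardsT card_ffun card_ord.
rewrite card_set_sum big_ffunS exchange_big /=.
under eq_bigr => t _ do
  [rewrite -card_set_sum; under eq_finset => x do rewrite imset_ffun_cons].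
case: k => [|k].
  rewrite mul0n big1 // => t _; apply/eqP.
  rewrite cards_eq0; apply/eqP/setP => x.
  by rewrite !inE cards_eq0; apply/set0Pn; exists x; rewrite setU11.
under eq_bigr => t _ do rewrite card_setU1_eqS.
rewrite big_split -!big_distrl /= -!card_set_sum !IHn ffactnSr; ring.
Qed.

Local Open Scope ring_scope.

Section TruncatedGeometric.

Variables (R : comNzSemiRingType) (M : nat).

Definition trunc_geom (a : R) : {poly R} := \poly_(j < M.+1) a ^+ j.

Lemma coef_prod_trunc_geom i (a : 'I_i -> R) l :
  (\prod_(k < i) trunc_geom (a k))`_l =
  \sum_(f : {ffun 'I_i -> 'I_M.+1} | (\sum_k (f k : nat))%N == l)
     \prod_k a k ^+ f k.
Proof.
under eq_bigr do rewrite /trunc_geom poly_def.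
rewrite bigA_distr_bigA coef_sum [RHS]big_mkcond /=; apply: eq_bigr => f _.
rewrite scaler_prod prodrXr coefZ coefXn eq_sym.
by case: eqP; rewrite ?mulr1 ?mulr0.
Qed.

Lemma coef_trunc_geom a j :
  (trunc_geom a)`_j = if (j <= M)%N then a ^+ j else 0.
Proof. exact: coef_poly. Qed.

Lemma coef_mul_trunc_geom (p : {poly R}) a l : (l < M)%N ->
  (p * trunc_geom a)`_l.+1 = p`_l.+1 + a * (p * trunc_geom a)`_l.
Proof.
move=> ltlM; rewrite !coefM big_ord_recr /= subnn coef_trunc_geom mulr1 addrC.
congr (_ + _); rewrite big_distrr /=; apply: eq_bigr => j _.
have ltljM : (l - j < M)%N by rewrite (leq_ltn_trans (leq_subr _ _)).
by rewrite subSn -1?ltnS // !coef_trunc_geom ltljM ltnW // exprS mulrCA.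
Qed.

Lemma coef_prod_trunc_geom_stirling2 i l : (l <= M)%N ->
  (\prod_(k < i) trunc_geom k.+1%:R)`_l = (stirling2 (l + i) i)%:R.
Proof.
elim: i l => [|i IHi] l leM.
  by rewrite big_ord0 coef1 addn0; case: l {leM}.
rewrite big_ord_recr /=; elim: l leM => [|l IHl] leM.
  by rewrite coef0M IHi // coef_trunc_geom mulr1 !stirling2nn.
rewrite coef_mul_trunc_geom // IHi // (IHl (ltnW leM)) addSnnS.
by rewrite addSn stirling2SS natrD natrM addrC.
Qed.

End TruncatedGeometric.

Lemma stirling2_S_set (R : comNzSemiRingType) i m :
  (stirling2 (m + i) i)%:R =
  \sum_(f in S_set i m) \prod_(k < i) k.+1%:R ^+ f k :> R.
Proof.
rewrite -(@coef_prod_trunc_geom_stirling2 R m i m (leqnn m)).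
rewrite (@coef_prod_trunc_geom R m i (fun k => k.+1%:R)).
by apply: eq_bigl => f; rewrite inE.
Qed.

Section NormalizeCol.

Variable R : zmodType.

Definition normalize_col N (c : 'cV[R]_N.+1) : 'cV[R]_N :=
  \col_j (c (lift ord0 j) 0 - c ord0 0).

Lemma normalize_colD_const N (c : 'cV[R]_N.+1) x :
  normalize_col (c + const_mx x) = normalize_col c.
Proof. by apply/matrixP => j k; rewrite !mxE opprD addrACA subrr addr0. Qed.

Lemma eq_normalize_col N (a b : 'cV[R]_N.+1) :
  normalize_col a = normalize_col b -> a = b + const_mx (a ord0 0 - b ord0 0).
Proof.
move/matrixP => eqab; apply/matrixP => r k; rewrite (ord1 k) !mxE.
case: (unliftP ord0 r) => [j|] ->; last by rewrite addrC subrK.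
have := eqab j 0; rewrite !mxE => /(canRL (subrK _)) ->.
by rewrite [RHS]addrA addrAC.
Qed.

End NormalizeCol.

Lemma col_equivE N n (B : 'M['F_2]_(N.+1, n)) k j :
  col_equiv B k j = (normalize_col (col k B) == normalize_col (col j B)).
Proof.
have oppF2 (c : 'cV['F_2]_N.+1) : - c = c.
  by apply/matrixP => r s; rewrite mxE oppr_pchar2 // pchar_Fp.
rewrite /col_equiv; set a := col k B; set b := col j B.
apply/idP/eqP => [/orP[]/eqP->|/eq_normalize_col ->] //.
  by rewrite addrC oppF2 normalize_colD_const.
have [->|->] : a ord0 0 - b ord0 0 = 0 \/ a ord0 0 - b ord0 0 = 1.
  by case: (_ - _) => -[|[|x]] // ?; [left | right]; apply/val_inj.
by rewrite addr0 eqxx.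
by rewrite [const_mx 1 - b]addrC oppF2 eqxx orbT.
Qed.

Lemma card_equivalence_partition (T rT : finType) (R : rel T) (f : T -> rT)
    (D : {set T}) :
  (forall x y, R x y = (f x == f y)) ->
  #|equivalence_partition R D| = #|f @: D|.
Proof.
move=> Rf; rewrite -(card_in_imset (f := fun y => [set x in D | f x == y])).
  rewrite -imset_comp; congr #|pred_of_set _|; apply: eq_imset => x /=.
  by apply/setP => y; rewrite !inE Rf eq_sym.
move=> _ _ /imsetP[x Dx ->] /imsetP[y Dy ->] /setP /(_ x).
by rewrite !inE Dx eqxx => /esym/eqP.
Qed.

Lemma num_classesE N n (B : 'M['F_2]_(N.+1, n)) :
  num_classes B = #|[set normalize_col (col k B) | k in 'I_n]|.
Proof.
rewrite /num_classes (card_equivalence_partition _ (col_equivE B)).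
congr #|pred_of_set _|.
by apply/setP => c; apply/imsetP/imsetP => -[k _ ->]; exists k.
Qed.

Section SplitMx.

Variables (R : zmodType) (N n : nat).

Definition split_mx (B : 'M[R]_(N.+1, n)) :
    {ffun 'I_n -> 'cV[R]_N} * {ffun 'I_n -> R} :=
  ([ffun k => normalize_col (col k B)], [ffun k => B ord0 k]).

Definition unsplit_mx (g : {ffun 'I_n -> 'cV[R]_N}) (s : {ffun 'I_n -> R}) :
    'M[R]_(N.+1, n) :=
  \matrix_(r, k) ((if unlift ord0 r is Some j then g k j 0 else 0) + s k).

Lemma split_mxK : cancel split_mx (fun p => unsplit_mx p.1 p.2).
Proof.
move=> B; apply/matrixP => r k; rewrite mxE !ffunE.
by case: unliftP => [j|] ->; rewrite ?add0r // !mxE subrK.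
Qed.

Lemma normalize_col_unsplit g s k :
  normalize_col (col k (unsplit_mx g s)) = g k.
Proof.
by apply/matrixP => j c; rewrite (ord1 c) !mxE liftK unlift_none add0r addrK.
Qed.

Lemma unsplit_mxK : cancel (fun p => unsplit_mx p.1 p.2) split_mx.
Proof.
case=> g s; congr pair; apply/ffunP => k.
  by rewrite ffunE normalize_col_unsplit.
by rewrite !ffunE mxE unlift_none add0r.
Qed.

End SplitMx.

Lemma card_num_classes N n i :
  #|[set B : 'M['F_2]_(N.+1, n) | num_classes B == i]| =
  (2 ^ n * (stirling2 n i * (2 ^ N) ^_ i))%N.
Proof.
rewrite card_set_sum (reindex (fun p => unsplit_mx p.1 p.2)); last first.
  by exists (@split_mx _ N n) => ? _; rewrite (split_mxK, unsplit_mxK).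
rewrite -(pair_bigA _ (fun g s => (num_classes (unsplit_mx g s) == i : nat))).
under eq_bigr => g _ do under eq_bigr => s _ do
  rewrite num_classesE (eq_imset _ (normalize_col_unsplit g s)).
rewrite (eq_bigr _ (fun g _ => sum_nat_const _ _)) -big_distrr -card_set_sum.
by rewrite card_ffuns_image card_ffun card_mx !card_Fp // card_ord muln1.
Qed.

Lemma natr_ffact (R : pzRingType) m i :
  (m ^_ i)%:R = \prod_(k < i) (m%:R - k%:R) :> R.
Proof.
elim: i => [|i IHi]; first by rewrite big_ord0.
rewrite ffactnSr natrM big_ord_recr /= -IHi.
by case: (leqP i m) => [/natrB ->|/ffact_small ->] //; rewrite !mul0r.
Qed.

Lemma prod_1B_div_ffact (F : fieldType) m i : m%:R != 0 :> F ->
  \prod_(k < i) (1 - k%:R / m%:R) = (m ^_ i)%:R / m%:R ^+ i :> F.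
Proof.
move=> m0; have -> : m%:R ^+ i = \prod_(k < i) m%:R :> F.
  by rewrite prodr_const card_ord.
rewrite natr_ffact -prodf_div; apply: eq_bigr => k _.
by rewrite mulrBl divff.
Qed.

Theorem theorem8p5 (N n i : nat) (hN : (1 <= N)%N) (hi1 : (1 <= i)%N)
    (hin : (i <= n)%N) :
  prob_num_classes N n i =
  1 / 2%:R ^+ ((N - 1) * (n - i)) *
  \sum_(f in S_set i (n - i))
     \prod_(k < i) ((k.+1)%:R ^+ (f k : nat) *
                    (1 - (k.+1 - 1)%:R / 2%:R ^+ (N - 1))) :> rat.
Proof.
case: N hN => // N _; rewrite subn1 /=.
under eq_bigr do rewrite big_split /=.
rewrite -big_distrl /= -stirling2_S_set subnK //.
under eq_bigr do rewrite subn1 -natrX.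
rewrite prod_1B_div_ffact ?pnatr_eq0 ?expn_eq0 // /prob_num_classes.
rewrite (card_num_classes N n i) card_mx card_Fp // !natrM !natrX.
have -> : (N.+1 * n = n + N * (n - i) + N * i)%N.
  by rewrite mulSn -addnA -mulnDr subnK.
by rewrite !exprD !exprM; field; rewrite !expf_neq0 // pnatr_eq0.
Qed.
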